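(* Let $n\ge 2$, $PS$ be strictly proper, and let $k$ be an integer with $1\le k\le k_B$. Let $(\bar\beta_\ell,\bar\beta_h)\in\mathbb R^2$ satisfy $\bar\beta_\ell\ge 0$, $\bar\beta_h\ge 0$ and $\bar\beta_h+\frac{P(\ell\mid h)}{P(h\mid h)}\bar\beta_\ell\le 1$. Then $u(\bar\beta_\ell,\bar\beta_h\mid h)\le u(\Sigma^*\mid h)$, with equality only when $(\bar\beta_\ell,\bar\beta_h)=(0,1)$.
   Context: Peer prediction setting with signals $\{\ell,h\}$ and a symmetric prior. $P(s\mid s')$ denotes the probability that another agent has signal $s$ given that one's own signal is $s'$, and $P_{s'}=P(\cdot\mid s')$. Standing assumptions: $P(h\mid h)>P(h\mid\ell)$, $P(h\mid\ell)>0$ and $P(\ell\mid h)>0$. $PS$ is a strictly proper scoring rule on $\{\ell,h\}$. For $\beta'\in\mathbb R$ and $(\beta_\ell,\beta_h)\in\mathbb R^2$, let $q=P(h\mid h)\beta_h+P(\ell\mid h)\beta_\ell$ and define $$f^h(\beta',(\beta_\ell,\beta_h))=\beta'\big[q\,PS(h,P_h)+(1-q)PS(\ell,P_h)\big]+(1-\beta')\big[q\,PS(h,P_\ell)+(1-q)PS(\ell,P_\ell)\big].$$ Define $$u(\bar\beta_\ell,\bar\beta_h\mid h)=\tfrac{n-k}{n-1}f^h(\bar\beta_h,(0,1))+\tfrac{k-1}{n-1}f^h(\bar\beta_h,(\bar\beta_\ell,\bar\beta_h)).$$ This is the interim utility of a signal-$h$ deviator when $k$ deviators all play $(\bar\beta_\ell,\bar\beta_h)$,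 i.e. report $h$ with probability $\bar\beta_\ell$ given signal $\ell$ and with probability $\bar\beta_h$ given signal $h$, and the remaining $n-k$ agents report truthfully. The truthful interim utility is $u(\Sigma^*\mid h)=P(h\mid h)PS(h,P_h)+P(\ell\mid h)PS(\ell,P_h)$. $k_B=\min(k_B^h,k_B^\ell,n)$, where $k_B^h=\lceil (n-1)\mathbb E_{s\sim P_\ell}[PS(s,P_\ell)-PS(s,P_h)]/(P(\ell\mid\ell)(PS(h,P_h)-PS(\ell,P_h)))\rceil$ if $PS(h,P_h)>PS(\ell,P_h)$ and $k_B^h=n$ otherwise; and $k_B^\ell=\lceil (n-1)\mathbb E_{s\sim P_h}[PS(s,P_h)-PS(s,P_\ell)]/(P(h\mid h)(PS(\ell,P_\ell)-PS(h,P_\ell)))\rceil$ if $PS(\ell,P_\ell)>PS(h,P_\ell)$ and $k_B^\ell=n$ otherwise. *)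

From Stdlib Require Import Reals Lra ZArith.
Open Scope R_scope.

Inductive signal := sl | sh.

(* A distribution on {l,h} is represented by its probability of h, in [0,1].
   A scoring rule PS : signal -> R -> R gives PS(s, p). *)
Definition expected_score (PS : signal -> R -> R) (p q : R) : R :=
  p * PS sh q + (1 - p) * PS sl q.

Definition strictly_proper (PS : signal -> R -> R) : Prop :=
  forall p q : R, 0 <= p <= 1 -> 0 <= q <= 1 -> p <> q ->
    expected_score PS p q < expected_score PS p p.

Definition Zceil (x : R) : Z := (- Int_part (- x))%Z.

(* Model parameters: phh = P(h|h), phl = P(h|l); hence P(l|h) = 1 - phh,
   P(l|l) = 1 - phl, P_h is (the distribution with h-probability) phh and
   P_l is phl. *)

Definition fh (PS : signal -> R -> R) (phh phl : R) (b' bl bh : R) : R :=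
  let q := phh * bh + (1 - phh) * bl in
  b' * (q * PS sh phh + (1 - q) * PS sl phh)
  + (1 - b') * (q * PS sh phl + (1 - q) * PS sl phl).

Definition u_dev (PS : signal -> R -> R) (phh phl : R) (n k : nat) (bl bh : R) : R :=
  (INR n - INR k) / (INR n - 1) * fh PS phh phl bh 0 1
  + (INR k - 1) / (INR n - 1) * fh PS phh phl bh bl bh.

Definition u_truth (PS : signal -> R -> R) (phh : R) : R :=
  phh * PS sh phh + (1 - phh) * PS sl phh.

Definition kB_h (PS : signal -> R -> R) (phh phl : R) (n : nat) : Z :=
  if Rlt_dec (PS sl phh) (PS sh phh) then
    Zceil ((INR n - 1) *
             (phl * (PS sh phl - PS sh phh) + (1 - phl) * (PS sl phl - PS sl phh))
           / ((1 - phl) * (PS sh phh - PS sl phh)))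
  else Z.of_nat n.

Definition kB_l (PS : signal -> R -> R) (phh phl : R) (n : nat) : Z :=
  if Rlt_dec (PS sh phl) (PS sl phl) then
    Zceil ((INR n - 1) *
             (phh * (PS sh phh - PS sh phl) + (1 - phh) * (PS sl phh - PS sl phl))
           / (phh * (PS sl phl - PS sh phl)))
  else Z.of_nat n.

Definition kB (PS : signal -> R -> R) (phh phl : R) (n : nat) : Z :=
  Z.min (kB_h PS phh phl n) (Z.min (kB_l PS phh phl n) (Z.of_nat n)).

(** Write [q] for the probability that a fellow deviator reports [h] given
    one's own signal [h].  Every term of [u] is affine in [q], with slope
    [PS(h,P_s) - PS(l,P_s)], so the deviator's loss against truth telling is
    [(1 - bh) D + (k-1)/(n-1) (P(h|h) - q) c], where
    [D = E_{P_h}[PS(s,P_h) - PS(s,P_l)] > 0] and [c] is a convex combination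
    of the two slopes.  Strict propriety makes the slope increasing in the
    reported belief, so [c >= -(PS(l,P_l) - PS(h,P_l))^+], and the constraint
    on the strategy gives [0 <= P(h|h) - q <= P(h|h) (1 - bh)].  Hence the
    loss is at least [(1 - bh)] times
    [D - (k-1)/(n-1) P(h|h) (PS(l,P_l) - PS(h,P_l))^+], which [k <= k_B^l]
    makes positive. *)

From Stdlib Require Import Reals ZArith Lra Lia.
Open Scope R_scope.

Lemma Zceil_gt_pred (x : R) (m : Z) : (m <= Zceil x)%Z -> IZR m - 1 < x.
Proof.
  unfold Zceil, Int_part; intros Hm.
  destruct (Zfloor_bound (- x)) as [_ Hfloor].
  assert (Hle : (Zfloor (- x) <= - m)%Z) by lia.
  apply IZR_le in Hle; rewrite opp_IZR in Hle; lra.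
Qed.

Definition score_slope (PS : signal -> R -> R) (p : R) : R := PS sh p - PS sl p.

Lemma expected_score_shift (PS : signal -> R -> R) (p p' q : R) :
  expected_score PS p q = expected_score PS p' q + (p - p') * score_slope PS q.
Proof. unfold expected_score, score_slope; ring. Qed.

Lemma strictly_proper_slope_lt (PS : signal -> R -> R) (p q : R) :
  strictly_proper PS -> 0 <= q -> q < p -> p <= 1 ->
  score_slope PS q < score_slope PS p.
Proof.
  intros proper Hq Hqp Hp.
  pose proof (proper p q ltac:(lra) ltac:(lra) ltac:(lra)) as Hpq.
  pose proof (proper q p ltac:(lra) ltac:(lra) ltac:(lra)) as Hqp'.
  rewrite (expected_score_shift PS p q q), (expected_score_shift PS p q p) in Hpq.
  assert (Hprod : 0 < (p - q) * (score_slope PS p - score_slope PS q)) by lra.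
  apply Rmult_lt_reg_l with (p - q); lra.
Qed.

Definition peer_h_report (phh bl bh : R) : R := phh * bh + (1 - phh) * bl.

Lemma peer_h_report_le (phh bl bh : R) :
  0 < phh -> 0 <= bl -> bh + (1 - phh) / phh * bl <= 1 ->
  peer_h_report phh bl bh <= phh.
Proof.
  intros Hphh Hbl Hc; unfold peer_h_report.
  replace (phh * bh + (1 - phh) * bl) with (phh * (bh + (1 - phh) / phh * bl))
    by (field; lra).
  assert (phh * (bh + (1 - phh) / phh * bl) <= phh * 1)
    by (apply Rmult_le_compat_l; lra).
  lra.
Qed.

Section HighSignalDeviation.

Variables (PS : signal -> R -> R) (phh phl : R).

Definition truth_gain : R :=
  expected_score PS phh phh - expected_score PS phh phl.

Hypothesis PS_proper : strictly_proper PS.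
Hypothesis phl_gt0 : 0 < phl.
Hypothesis phl_lt_phh : phl < phh.
Hypothesis phh_lt1 : 0 < 1 - phh.

Lemma truth_gain_gt0 : 0 < truth_gain.
Proof. unfold truth_gain; pose proof (PS_proper phh phl); lra. Qed.

Lemma fh_eq (b' bl bh : R) :
  fh PS phh phl b' bl bh =
  u_truth PS phh - (1 - b') * truth_gain
  - (phh - peer_h_report phh bl bh)
    * (b' * score_slope PS phh + (1 - b') * score_slope PS phl).
Proof.
  unfold fh, u_truth, truth_gain, peer_h_report, expected_score, score_slope.
  ring.
Qed.

Lemma u_dev_eq (n k : nat) (bl bh : R) :
  INR n - 1 <> 0 ->
  u_dev PS phh phl n k bl bh =
  u_truth PS phh - (1 - bh) * truth_gain
  - (INR k - 1) / (INR n - 1) * (phh - peer_h_report phh bl bh)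
    * (bh * score_slope PS phh + (1 - bh) * score_slope PS phl).
Proof.
  intros Hn; unfold u_dev; rewrite !fh_eq.
  replace (peer_h_report phh 0 1) with phh by (unfold peer_h_report; ring).
  field; exact Hn.
Qed.

(* The numerator of [k_B^l] is [truth_gain]: this is the only place where the
   bound on [k] enters. *)
Lemma collusion_gain_lt (n k : nat) :
  (2 <= n)%nat -> (Z.of_nat k <= kB_l PS phh phl n)%Z ->
  (INR k - 1) * (phh * Rmax 0 (- score_slope PS phl))
  < (INR n - 1) * truth_gain.
Proof.
  intros Hn Hk.
  assert (HN : 1 <= INR n - 1) by (apply le_INR in Hn; simpl in Hn; lra).
  pose proof truth_gain_gt0 as HD.
  unfold kB_l in Hk; destruct (Rlt_dec (PS sh phl) (PS sl phl)) as [Hslope | Hslope].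
  - rewrite Rmax_right by (unfold score_slope; lra).
    apply Zceil_gt_pred in Hk; rewrite <- INR_IZR_INZ in Hk.
    assert (Hden : 0 < phh * (PS sl phl - PS sh phl)) by nra.
    apply (Rmult_lt_compat_r _ _ _ Hden) in Hk.
    unfold Rdiv in Hk; rewrite Rmult_assoc, Rinv_l, Rmult_1_r in Hk by lra.
    unfold truth_gain, expected_score, score_slope; lra.
  - rewrite Rmax_left by (unfold score_slope; lra).
    rewrite !Rmult_0_r; nra.
Qed.

Lemma u_truth_sub_u_dev_ge (n k : nat) (bl bh : R) :
  (2 <= n)%nat -> (1 <= k)%nat ->
  0 <= bl -> 0 <= bh -> bh + (1 - phh) / phh * bl <= 1 ->
  (1 - bh) * ((INR n - 1) * truth_gain
              - (INR k - 1) * (phh * Rmax 0 (- score_slope PS phl)))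
  <= (INR n - 1) * (u_truth PS phh - u_dev PS phh phl n k bl bh).
Proof.
  intros Hn Hk Hbl Hbh Hc.
  assert (HN : 1 <= INR n - 1) by (apply le_INR in Hn; simpl in Hn; lra).
  assert (HK : 0 <= INR k - 1) by (apply le_INR in Hk; simpl in Hk; lra).
  pose proof (peer_h_report_le phh bl bh ltac:(lra) Hbl Hc) as Hq.
  rewrite u_dev_eq by lra.
  set (d := phh - peer_h_report phh bl bh) in *.
  set (c := bh * score_slope PS phh + (1 - bh) * score_slope PS phl).
  set (Y := Rmax 0 (- score_slope PS phl)).
  assert (Hd0 : 0 <= d) by (unfold d; lra).
  assert (Hd1 : d <= phh * (1 - bh))
    by (unfold d, peer_h_report; nra).
  assert (Hbh1 : bh <= 1) by (unfold d, peer_h_report in *; nra).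
  assert (HY0 : 0 <= Y) by apply Rmax_l.
  assert (Hc_ge : - Y <= c).
  { pose proof (strictly_proper_slope_lt PS phh phl PS_proper ltac:(lra)
                  phl_lt_phh ltac:(lra)).
    pose proof (Rmax_r 0 (- score_slope PS phl)).
    unfold c, Y in *; nra. }
  assert (Hcollusion : - ((INR k - 1) * (phh * Y) * (1 - bh))
                       <= (INR k - 1) * d * c).
  { assert (d * Y <= phh * (1 - bh) * Y) by nra.
    assert (- (d * Y) <= d * c) by nra.
    nra. }
  replace ((INR n - 1) * (u_truth PS phh
    - (u_truth PS phh - (1 - bh) * truth_gain - (INR k - 1) / (INR n - 1) * d * c)))
    with ((INR n - 1) * (1 - bh) * truth_gain + (INR k - 1) * d * c)
    by (field; lra).
  lra.
Qed.

End HighSignalDeviation.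

Theorem lemma1 (PS : signal -> R -> R) (phh phl : R) (n k : nat) (bl bh : R) :
  phl < phh -> 0 < phl -> 0 < 1 - phh ->
  (2 <= n)%nat ->
  strictly_proper PS ->
  (1 <= k)%nat -> (Z.of_nat k <= kB PS phh phl n)%Z ->
  0 <= bl -> 0 <= bh -> bh + (1 - phh) / phh * bl <= 1 ->
  u_dev PS phh phl n k bl bh <= u_truth PS phh /\
  (u_dev PS phh phl n k bl bh = u_truth PS phh -> bl = 0 /\ bh = 1).
Proof.
  intros Hlh Hl Hh Hn proper Hk HkB Hbl Hbh Hc.
  assert (HkBl : (Z.of_nat k <= kB_l PS phh phl n)%Z) by (unfold kB in HkB; lia).
  assert (HN : 1 <= INR n - 1) by (apply le_INR in Hn; simpl in Hn; lra).
  pose proof (collusion_gain_lt PS phh phl proper Hl Hlh Hh n k Hn HkBl) as Hgap.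
  pose proof (u_truth_sub_u_dev_ge PS phh phl proper Hl Hlh Hh n k bl bh
                Hn Hk Hbl Hbh Hc) as Hloss.
  pose proof (peer_h_report_le phh bl bh ltac:(lra) Hbl Hc) as Hq.
  unfold peer_h_report in Hq.
  assert (Hbh1 : bh <= 1) by nra.
  split.
  - nra.
  - intros Heq.
    assert (Hbh_eq : bh = 1) by nra.
    subst bh; split; [nra | reflexivity].
Qed.
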